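(* Let $\mathcal A$ be a commutative unital $C^*$-algebra, let $(E,\langle\cdot,\cdot\rangle)$ be a Hilbert $\mathcal A$-module, and let $\{x_i\}_{i\in\mathbb N}$ be a frame for $E$ with bounds $A,B$. Let $\xi\in E$ be such that $\langle\xi,\xi\rangle$ is invertible in $\mathcal A$, and equip $E$ with the standard $\mathcal A$-2-inner product $\langle x,y|z\rangle=\langle x,y\rangle\langle z,z\rangle-\langle x,z\rangle\langle z,y\rangle$. Then there exist real numbers $0<C\le D$ such that for all $x\in E$ $$C\langle x,x|\xi\rangle\le\sum_{i\in\mathbb N}\langle x,x_i|\xi\rangle\langle x_i,x|\xi\rangle\le D\langle x,x|\xi\rangle,$$ i.e. $\{x_i\}$ is an $\mathcal A$-2-frame associated to $\xi$ for this 2-inner product (one may take $D=B\|\langle\xi,\xi\rangle\|$).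
   Context: A Hilbert $\mathcal A$-module is a left $\mathcal A$-module $E$ with an $\mathcal A$-valued inner product $\langle\cdot,\cdot\rangle$ satisfying $\langle x,x\rangle\ge0$, $\langle x,x\rangle=0$ iff $x=0$, $\langle x,y\rangle=\langle y,x\rangle^*$, $\langle ax,by\rangle=a^*\langle x,y\rangle b$, complex-linear in the second variable, and complete for $\|x\|=\|\langle x,x\rangle\|^{1/2}$. A sequence $\{x_j\}_{j\in J}$ in $E$ is a frame for $E$ if there are real numbers $0<A\le B$ with $A\langle x,x\rangle\le\sum_{j}\langle x,x_j\rangle\langle x_j,x\rangle\le B\langle x,x\rangle$ for all $x\in E$ (order of self-adjoint elements of $\mathcal A$, series norm-convergent). *)

From mathcomp Require Import all_boot all_order all_algebra.
From mathcomp Require Import all_classical all_reals all_analysis.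
From mathcomp Require Import complex.
Set Implicit Arguments. Unset Strict Implicit. Unset Printing Implicit Defensive.
Import Order.TTheory GRing.Theory Num.Theory numFieldNormedType.Exports.
Local Open Scope ring_scope.
Local Open Scope complex_scope.
Local Open Scope classical_set_scope.

Record is_comCstar_algebra (R : realType) (A : completeNormedModType R[i])
    (mul : A -> A -> A) (one : A) (star : A -> A) : Prop := {
  cs_mulA : forall a b c, mul a (mul b c) = mul (mul a b) c;
  cs_mulC : forall a b, mul a b = mul b a;
  cs_mul1 : forall a, mul one a = a;
  cs_mulDl : forall a b c, mul (a + b) c = mul a c + mul b c;
  cs_mulZl : forall (k : R[i]) a b, mul (k *: a) b = k *: mul a b;
  cs_norm_mul : forall a b, `|mul a b| <= `|a| * `|b|;
  cs_starK : forall a, star (star a) = a;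
  cs_starD : forall a b, star (a + b) = star a + star b;
  cs_starZ : forall (k : R[i]) a, star (k *: a) = k^* *: star a;
  cs_starM : forall a b, star (mul a b) = mul (star b) (star a);
  cs_Cstar : forall a, `|mul (star a) a| = `|a| ^+ 2
}.

Definition cs_pos (R : realType) (A : completeNormedModType R[i])
  (mul : A -> A -> A) (star : A -> A) (a : A) : Prop :=
  exists c, a = mul (star c) c.

Definition cs_le (R : realType) (A : completeNormedModType R[i])
  (mul : A -> A -> A) (star : A -> A) (a b : A) : Prop :=
  cs_pos mul star (b - a).

Definition cs_invertible (R : realType) (A : completeNormedModType R[i])
  (mul : A -> A -> A) (one : A) (a : A) : Prop :=
  exists b, mul a b = one /\ mul b a = one.

(* Completeness is
   stated with the squared norm ||<x,x>||, which gives the same notions of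
   Cauchy sequence and of convergence. *)
Record is_hilbert_module (R : realType) (A : completeNormedModType R[i])
    (mul : A -> A -> A) (one : A) (star : A -> A)
    (E : lmodType R[i]) (act : A -> E -> E) (ip : E -> E -> A) : Prop := {
  hm_actM : forall a b x, act (mul a b) x = act a (act b x);
  hm_act1 : forall x, act one x = x;
  hm_actDl : forall a b x, act (a + b) x = act a x + act b x;
  hm_actDr : forall a x y, act a (x + y) = act a x + act a y;
  hm_actZl : forall (k : R[i]) a x, act (k *: a) x = k *: act a x;
  hm_actZr : forall (k : R[i]) a x, act a (k *: x) = k *: act a x;
  hm_ip_pos : forall x, cs_pos mul star (ip x x);
  hm_ip_def : forall x, ip x x = 0 -> x = 0;
  hm_ip_sym : forall x y, ip x y = star (ip y x);
  hm_ip_act : forall a b x y, ip (act a x) (act b y) = mul (mul (star a) (ip x y)) b;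
  hm_ipDr : forall x y z, ip x (y + z) = ip x y + ip x z;
  hm_ipZr : forall (k : R[i]) x y, ip x (k *: y) = k *: ip x y;
  hm_complete : forall u : nat -> E,
    (forall eps : R[i], 0 < eps -> exists N, forall m n, (N <= m)%N -> (N <= n)%N ->
        `|ip (u m - u n) (u m - u n)| < eps) ->
    exists l : E, forall eps : R[i], 0 < eps -> exists N, forall n, (N <= n)%N ->
        `|ip (u n - l) (u n - l)| < eps
}.

Definition series_to (R : realType) (A : completeNormedModType R[i])
  (f : nat -> A) (s : A) : Prop :=
  (fun n => \sum_(i < n) f i) @ \oo --> s.

Definition is_frame (R : realType) (A : completeNormedModType R[i])
    (mul : A -> A -> A) (star : A -> A)
    (E : lmodType R[i]) (ip : E -> E -> A) (xs : nat -> E) : Prop :=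
  exists (lb ub : R), 0 < lb /\ lb <= ub /\
    forall x : E, exists s : A,
      series_to (fun i => mul (ip x (xs i)) (ip (xs i) x)) s /\
      cs_le mul star ((lb%:C) *: ip x x) s /\
      cs_le mul star s ((ub%:C) *: ip x x).

Definition ip2 (R : realType) (A : completeNormedModType R[i])
    (mul : A -> A -> A) (E : lmodType R[i]) (ip : E -> E -> A) (x y z : E) : A :=
  mul (ip x y) (ip z z) - mul (ip x z) (ip z y).

From HB Require Import structures.
From mathcomp Require Import all_boot all_order all_algebra.
From mathcomp Require Import all_classical all_reals all_analysis.
From mathcomp Require Import complex ring lra.
Import Order.TTheory GRing.Theory Num.Theory numFieldNormedType.Exports.
Local Open Scope ring_scope.
Local Open Scope complex_scope.
Local Open Scope classical_set_scope.

(* Let g = <xi,xi> with inverse g' and, for x in E, let y = x - (g' <xi,x>) xi be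
   the part of x orthogonal to xi.  Commutativity gives <x,z|xi> = <y,z> g and
   <z,x|xi> = <z,y> g, so the 2-frame series of x is g^2 times the frame series
   of y, while <x,x|xi> = <y,y> g.  Multiplying the frame inequalities of y by
   g^2 and using c <= g <= ||g|| with c = ||g'||^-1 gives the bounds A c and
   B ||g||.  Positive elements are those of the form c^* c; that they are
   closed under sums follows from the norm characterisation h = h^*,
   ||t - h|| <= t, which needs square roots of 1 - w for self-adjoint w with
   ||w|| <= 1: they are 1 - z where z is the limit of z <- (w + z^2)/2. *)

Section ComCstarAlgebra.
Context {R : realType} {A : completeNormedModType R[i]}.
Context {mul : A -> A -> A} {one : A} {star : A -> A}.
Hypothesis HA : is_comCstar_algebra mul one star.
Hypothesis one_neq0 : one != 0.

Definition Alg : Type := A.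
HB.instance Definition _ := CompleteNormedModule.on Alg.
HB.instance Definition _ := GRing.Zmodule_isComNzRing.Build Alg
  (cs_mulA HA) (cs_mulC HA) (cs_mul1 HA) (cs_mulDl HA) one_neq0.

Lemma scalerAl_Alg (k : R[i]) (a b : Alg) : k *: (a * b) = (k *: a) * b.
Proof. by rewrite /GRing.mul /= (cs_mulZl HA). Qed.

HB.instance Definition _ := GRing.Lmodule_isLalgebra.Build R[i] Alg scalerAl_Alg.
HB.instance Definition _ := GRing.Lalgebra_isComAlgebra.Build R[i] Alg.

Definition rnorm (x : Alg) : R := complex.Re `|x|.
Definition adj (x : Alg) : Alg := star x.

Lemma rnormE x : `|x| = (rnorm x)%:C.
Proof. by rewrite [LHS]complexE (ger0_Im (normr_ge0 x)) mulr0 addr0. Qed.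

Lemma rnorm_ge0 x : 0 <= rnorm x.
Proof. by have := normr_ge0 x; rewrite rnormE lecR. Qed.

Lemma rnormD x y : rnorm (x + y) <= rnorm x + rnorm y.
Proof. by have := ler_normD x y; rewrite !rnormE -rmorphD lecR. Qed.

Lemma rnormN x : rnorm (- x) = rnorm x.
Proof. by rewrite /rnorm normrN. Qed.

Lemma rnorm0 : rnorm 0 = 0.
Proof. by rewrite /rnorm normr0. Qed.

Lemma rnorm_eq0 {x} : rnorm x = 0 -> x = 0.
Proof. by move=> x0; apply/normr0_eq0; rewrite rnormE x0. Qed.

Lemma rnormZ (r : R) x : rnorm (r%:C *: x) = `|r| * rnorm x.
Proof.
have normcR : `|r%:C| = `|r|%:C.
  by rewrite normc_def /= expr0n /= addr0 sqrtr_sqr.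
by rewrite /rnorm normrZ normcR rnormE -rmorphM.
Qed.

Lemma rnormM x y : rnorm (x * y) <= rnorm x * rnorm y.
Proof. by have := cs_norm_mul HA x y; rewrite !rnormE -rmorphM lecR. Qed.

Lemma rnorm_cstar x : rnorm (adj x * x) = rnorm x ^+ 2.
Proof. by have := cs_Cstar HA x; rewrite !rnormE -rmorphXn => -[]. Qed.

Lemma adjK : involutive adj. Proof. exact: (cs_starK HA). Qed.

Lemma adjD x y : adj (x + y) = adj x + adj y. Proof. exact: (cs_starD HA). Qed.

Lemma adjM x y : adj (x * y) = adj x * adj y.
Proof. by rewrite /adj (cs_starM HA) mulrC. Qed.

Lemma adjZ (k : R[i]) x : adj (k *: x) = k^* *: adj x. Proof. exact: (cs_starZ HA). Qed.

Lemma adjZR (r : R) x : adj (r%:C *: x) = r%:C *: adj x.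
Proof. by rewrite adjZ conj_Creal // complex_real. Qed.

Lemma adj0 : adj 0 = 0.
Proof. by apply: (@addrI _ (adj 0)); rewrite -adjD !addr0. Qed.

Lemma adjN x : adj (- x) = - adj x.
Proof. by apply/eqP; rewrite -addr_eq0 -adjD addNr adj0. Qed.

Lemma adjB x y : adj (x - y) = adj x - adj y.
Proof. by rewrite adjD adjN. Qed.

Lemma adj1 : adj 1 = 1.
Proof. by rewrite -[adj 1]mulr1 -{2}[1]adjK -adjM mul1r adjK. Qed.

Lemma rnorm_adj x : rnorm (adj x) = rnorm x.
Proof.
suff le_adj y : rnorm y <= rnorm (adj y).
  by apply/le_anti; rewrite le_adj andbT -{2}[x]adjK le_adj.
have := rnormM (adj y) y; rewrite rnorm_cstar.
have := rnorm_ge0 y; have := rnorm_ge0 (adj y); nra.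
Qed.

Lemma rnorm1 : rnorm 1 = 1.
Proof.
have r1_neq0 : rnorm 1 != 0 by apply: contra_neq one_neq0 => /rnorm_eq0.
by apply: (mulfI r1_neq0); rewrite mulr1 -expr2 -rnorm_cstar adj1 mulr1.
Qed.

Lemma gt0_complexE (e : R[i]) : 0 < e -> exists2 r : R, 0 < r & e = r%:C.
Proof.
rewrite ltcE /= => /andP[/eqP Ie Re0]; exists (complex.Re e) => //.
by rewrite [LHS]complexE Ie mulr0 addr0.
Qed.

Lemma cvg_rnormP (u : nat -> Alg) (l : Alg) :
  u @ \oo --> l <-> rnorm (u n - l) @[n --> \oo] --> (0 : R).
Proof.
split=> [/cvgr_distC_lt ul | /cvgr0_norm_lt ul].
- apply/cvgr0Pnorm_lt => e e0.
  have /ul : 0 < e%:C by rewrite ltcR.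
  by apply: filterS => n; rewrite rnormE ltcR ger0_norm // rnorm_ge0.
- apply/cvgrPdistC_lt => _ /gt0_complexE[e e0 ->].
  apply: filterS (ul e e0) => n.
  by rewrite rnormE ltcR ger0_norm // rnorm_ge0.
Qed.

Lemma cvg_adj {u : nat -> Alg} {l : Alg} :
  u @ \oo --> l -> adj (u n) @[n --> \oo] --> adj l.
Proof.
move=> /cvg_rnormP ul; apply/cvg_rnormP.
suff -> : (fun n => rnorm (adj (u n) - adj l)) = (fun n => rnorm (u n - l)) by [].
by apply/funext => n; rewrite -adjB rnorm_adj.
Qed.

Lemma cvg_mul {u v : nat -> Alg} {l m : Alg} :
  u @ \oo --> l -> v @ \oo --> m -> u n * v n @[n --> \oo] --> l * m.
Proof.
move=> /cvg_rnormP ul /cvg_rnormP vm; apply/cvg_rnormP.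
set p := fun n => rnorm (u n - l); set q := fun n => rnorm (v n - m).
have bound n : rnorm (u n * v n - l * m) <= p n * q n + p n * rnorm m + rnorm l * q n.
  have -> : u n * v n - l * m = (u n - l) * (v n - m) + (u n - l) * m + l * (v n - m).
    by ring.
  have := rnormD ((u n - l) * (v n - m) + (u n - l) * m) (l * (v n - m)).
  have := rnormD ((u n - l) * (v n - m)) ((u n - l) * m).
  have := rnormM (u n - l) (v n - m); have := rnormM (u n - l) m.
  have := rnormM l (v n - m); rewrite /p /q; lra.
have bound0 : p n * q n + p n * rnorm m + rnorm l * q n @[n --> \oo] --> (0 : R).
  have := cvgD (cvgD (cvgM ul vm) (cvgM ul (cvg_cst (rnorm m))))
    (cvgM (cvg_cst (rnorm l)) vm).
  by rewrite !mul0r mulr0 !addr0 => lim; exact: lim.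
apply: (squeeze_cvgr _ (cvg_cst 0) bound0).
by apply: nearW => n; rewrite rnorm_ge0 bound.
Qed.

Lemma majorant_cvg {u : nat -> Alg} {t : nat -> R} :
  nondecreasing_seq t -> has_ubound (range t) ->
  (forall n k, rnorm (u (n + k)%N - u n) <= t (n + k)%N - t n) ->
  exists l : Alg, u @ \oo --> l.
Proof.
move=> t_nd t_ub dom.
have : cvg (u @ \oo).
  apply: cauchy_cvg; apply: cauchy_exP => _ /gt0_complexE[e e0 ->].
  move/cvgr_dist_lt: (nondecreasing_cvgn t_nd t_ub) => /(_ e e0)[N _ tN].
  exists (u N), N => // n /= Nn.
  rewrite -ball_normE /ball_ /= rnormE ltcR -rnormN opprB.
  have := dom N (n - N)%N; rewrite subnKC //.
  have : t n <= sup (range t).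
    by apply: sup_upper_bound; [split=> //; exists (t 0%N), 0%N | exists n].
  have := tN N (leqnn N); have := ler_norm (sup (range t) - t N); lra.
by move=> /cvg_ex[l ul]; exists l.
Qed.

(* A fixed point of z = (w + z^2)/2 satisfies (1 - z)^2 = 1 - w; in [Alg] the
   iteration is dominated by its scalar instance [tseq] (w = 1). *)
Fixpoint sqrt_iter {T : pzRingType} (h w : T) (n : nat) : T :=
  if n is k.+1 then h * (w + sqrt_iter h w k ^+ 2) else 0.

Local Notation tseq := (sqrt_iter (2^-1 : R) 1).
Local Notation half := ((2^-1 : R)%:C%:A : Alg).

Lemma tseq_bound n : 0 <= tseq n <= 1.
Proof. by elim: n => [|n /andP[t0 t1]] /=; [rewrite lexx ler01 | apply/andP; split; nra]. Qed.

Lemma tseq_nondecreasing : nondecreasing_seq tseq.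
Proof.
apply/nondecreasing_seqP; elim=> [|n IH] /=; first by have := tseq_bound 1; simpl; nra.
by have := tseq_bound n; have := tseq_bound n.+1; simpl; nra.
Qed.

Lemma rnorm_half x : rnorm (half * x) = 2^-1 * rnorm x.
Proof. by rewrite mulr_algl rnormZ ger0_norm // invr_ge0 ler0n. Qed.

Lemma adj_algR (r : R) : adj r%:C%:A = r%:C%:A.
Proof. by rewrite adjZR adj1. Qed.

Lemma halfD : half + half = 1.
Proof. by rewrite -scalerDl -rmorphD (_ : 2^-1 + 2^-1 = 1 :> R) ?scale1r //; lra. Qed.

Lemma rnorm_sqrt_iter {w} : rnorm w <= 1 -> forall n, rnorm (sqrt_iter half w n) <= tseq n.
Proof.
move=> w1; elim=> [|n IH] /=; first by rewrite rnorm0.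
set z := sqrt_iter half w n; rewrite rnorm_half expr2.
have := rnormD w (z * z); have := rnormM z z; have := rnorm_ge0 z.
by have := tseq_bound n; nra.
Qed.

Lemma sqrt_iter_cauchy {w} : rnorm w <= 1 -> forall n k,
  rnorm (sqrt_iter half w (n + k)%N - sqrt_iter half w n) <= tseq (n + k)%N - tseq n.
Proof.
move=> w1; elim=> [|n IH] k; first by rewrite add0n /= !subr0 rnorm_sqrt_iter.
rewrite addSn /=.
set a := sqrt_iter half w (n + k); set b := sqrt_iter half w n.
have -> : half * (w + a ^+ 2) - half * (w + b ^+ 2) = half * ((a - b) * (a + b)) by ring.
rewrite rnorm_half.
have a1 : rnorm a <= tseq (n + k)%N by apply: rnorm_sqrt_iter.
have b1 : rnorm b <= tseq n by apply: rnorm_sqrt_iter.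
have apb : rnorm (a + b) <= tseq (n + k)%N + tseq n by have := rnormD a b; lra.
have : rnorm (a - b) * rnorm (a + b) <=
    (tseq (n + k)%N - tseq n) * (tseq (n + k)%N + tseq n).
  by apply: ler_pM; rewrite ?rnorm_ge0 ?IH.
by have := rnormM (a - b) (a + b); have := tseq_bound n; nra.
Qed.

Lemma adj_sqrt_iter w n : adj w = w -> adj (sqrt_iter half w n) = sqrt_iter half w n.
Proof.
by move=> wsa; elim: n => [|n IH] /=; rewrite ?adj0 // adjM adjD expr2 adjM IH wsa adj_algR.
Qed.

Lemma sqrt_one_sub {w : Alg} : adj w = w -> rnorm w <= 1 -> exists2 b, adj b = b & b * b = 1 - w.
Proof.
move=> wsa w1; set z := sqrt_iter half w.
have [l zl] : exists l : Alg, z @ \oo --> l.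
  apply: (majorant_cvg tseq_nondecreasing _ (sqrt_iter_cauchy w1)).
  by exists 1 => _ [n _ <-]; case/andP: (tseq_bound n).
have l_fix : l = half * (w + l * l).
  have z1l : half * (w + z n * z n) @[n --> \oo] --> l.
    have -> : (fun n => half * (w + z n * z n)) = (fun n => z n.+1).
      by rewrite funeqE => n; rewrite /z /= expr2.
    by rewrite cvg_shiftS.
  apply: (cvg_unique _ z1l); first exact: norm_hausdorff.
  apply: cvg_mul; first exact: cvg_cst.
  by apply: cvgD; [exact: cvg_cst | exact: (cvg_mul zl zl)].
have l_sa : adj l = l.
  apply: (cvg_unique _ (cvg_adj zl)); first exact: norm_hausdorff.
  by rewrite (_ : (fun n => adj (z n)) = z) // funeqE => n; rewrite adj_sqrt_iter.
exists (1 - l); first by rewrite adjB adj1 l_sa.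
have l2 : l + l = w + l * l by rewrite {1 2}l_fix -mulrDl halfD mul1r.
have -> : w = l + l - l * l by rewrite l2; ring.
ring.
Qed.

Lemma sqr_alg_i : 'i%:A * 'i%:A = -1 :> Alg.
Proof. by rewrite -scalerAl mul1r scalerA -expr2 sqrCi scaleN1r. Qed.

Lemma adj_alg_i : adj 'i%:A = - 'i%:A.
Proof. by rewrite adjZ adj1 conjCi scaleNr. Qed.

Lemma rnorm_alg_i : rnorm 'i%:A = 1.
Proof. by rewrite -[RHS]rnorm1 /rnorm normrZ normCi mul1r. Qed.

(* With c^2 = 1 - a^2, u = a + i c is unitary, hence of norm <= 1, and 2 c = i (u^* - u). *)
Lemma rnorm_one_sub_sqr a : adj a = a -> rnorm a <= 1 -> rnorm (1 - a * a) <= 1.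
Proof.
move=> a_sa a1.
have aa_sa : adj (a * a) = a * a by rewrite adjM a_sa.
have aa1 : rnorm (a * a) <= 1 by have := rnormM a a; have := rnorm_ge0 a; nra.
have [c c_sa cc] := sqrt_one_sub aa_sa aa1.
rewrite -cc; set u := a + 'i%:A * c.
have adj_u : adj u = a - 'i%:A * c by rewrite adjD adjM a_sa c_sa adj_alg_i mulNr.
have u1 : rnorm u <= 1.
  have : rnorm (adj u * u) = 1.
    have -> : adj u * u = a * a - 'i%:A * 'i%:A * (c * c) by rewrite adj_u /u; ring.
    by rewrite sqr_alg_i cc mulN1r opprK addrC subrK rnorm1.
  by rewrite rnorm_cstar; have := rnorm_ge0 u; nra.
have c_u : c + c = 'i%:A * (adj u - u).
  have -> : 'i%:A * (adj u - u) = - ('i%:A * 'i%:A) * (c + c) by rewrite adj_u /u; ring.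
  by rewrite sqr_alg_i opprK mul1r.
have c1 : rnorm (c + c) <= 2.
  rewrite c_u; have := rnormM 'i%:A (adj u - u); rewrite rnorm_alg_i mul1r.
  by have := rnormD (adj u) (- u); rewrite rnormN rnorm_adj; lra.
have c2 : (2 : R)%:C *: c = c + c by rewrite rmorph_nat scaler_nat mulr2n.
move: c1; rewrite -c2 rnormZ ger0_norm // => c1.
by have := rnormM c c; have := rnorm_ge0 c; nra.
Qed.

Definition psd (a : Alg) := exists c, a = adj c * c.

(* The norm characterisation of positivity: unlike [psd], it is visibly closed under sums. *)
Definition normpos (h : Alg) :=
  adj h = h /\ exists2 t : R, 0 <= t & rnorm (t%:C%:A - h) <= t.

Lemma normpos_psd h : normpos h -> psd h.
Proof.
move=> [h_sa [t t0 ht]].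
have [t_eq0|t_neq0] := eqVneq t 0.
  move: ht; rewrite t_eq0 scale0r sub0r rnormN => h0.
  have -> : h = 0 by apply: rnorm_eq0; apply/le_anti; rewrite h0 rnorm_ge0.
  by exists 0; rewrite mulr0.
set w := 1 - (t^-1)%:C *: h.
have w_sa : adj w = w by rewrite adjB adj1 adjZR h_sa.
have w1 : rnorm w <= 1.
  have -> : w = (t^-1)%:C *: (t%:C%:A - h).
    by rewrite scalerBr scalerA -rmorphM mulVf // scale1r.
  rewrite rnormZ ger0_norm ?invr_ge0 // -(mulVf t_neq0).
  by rewrite ler_wpM2l // invr_ge0.
have [b b_sa bb] := sqrt_one_sub w_sa w1.
exists ((Num.sqrt t)%:C *: b).
rewrite adjZR b_sa -scalerAl -scalerAr scalerA -rmorphM -expr2 sqr_sqrtr // bb.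
by rewrite /w opprB addrC subrK scalerA -rmorphM mulfV // scale1r.
Qed.

Lemma normpos_add h k : normpos h -> normpos k -> normpos (h + k).
Proof.
move=> [h_sa [s s0 hs]] [k_sa [t t0 kt]]; split; first by rewrite adjD h_sa k_sa.
exists (s + t); first exact: addr_ge0.
have -> : (s + t)%:C%:A - (h + k) = (s%:C%:A - h) + (t%:C%:A - k).
  by rewrite rmorphD scalerDl addrACA opprD.
by have := rnormD (s%:C%:A - h) (t%:C%:A - k); lra.
Qed.

Lemma normpos_sqr a : adj a = a -> normpos (a * a).
Proof.
move=> a_sa; split; first by rewrite adjM a_sa.
set r := rnorm a; exists (r ^+ 2); first exact: sqr_ge0.
have [r_eq0|r_neq0] := eqVneq r 0.
  by rewrite (rnorm_eq0 r_eq0) r_eq0 expr0n /= mulr0 scale0r subr0 rnorm0.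
set b := (r^-1)%:C *: a.
have b_sa : adj b = b by rewrite adjZR a_sa.
have b1 : rnorm b <= 1 by rewrite rnormZ ger0_norm ?invr_ge0 ?rnorm_ge0 // mulVf.
have -> : (r ^+ 2)%:C%:A - a * a = (r ^+ 2)%:C *: (1 - b * b).
  rewrite scalerBr -scalerAl -scalerAr !scalerA -!rmorphM.
  by rewrite expr2 mulfK // mulfV // scale1r.
rewrite rnormZ ger0_norm ?sqr_ge0 //.
by rewrite -[leRHS]mulr1 ler_wpM2l ?sqr_ge0 // rnorm_one_sub_sqr.
Qed.

(* c^* c = a^2 + b^2 for the self-adjoint real and imaginary parts a, b of c. *)
Lemma psd_normpos h : psd h -> normpos h.
Proof.
move=> [c ->]; set a := half * (c + adj c); set b := half * 'i%:A * (adj c - c).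
have a_sa : adj a = a by rewrite adjM adj_algR adjD adjK addrC.
have b_sa : adj b = b.
  by rewrite !adjM adj_algR adj_alg_i adjB adjK /b; ring.
have -> : adj c * c = a * a + b * b.
  have -> : a * a + b * b =
      half * half * ((c + adj c) ^+ 2 + 'i%:A * 'i%:A * (adj c - c) ^+ 2).
    by rewrite /a /b; ring.
  rewrite sqr_alg_i (_ : half * half * _ = (half + half) * (half + half) * (adj c * c)).
    by rewrite halfD !mul1r.
  by ring.
by apply: normpos_add; apply: normpos_sqr.
Qed.

Lemma psd_add {a b : Alg} : psd a -> psd b -> psd (a + b).
Proof. by move=> /psd_normpos pa /psd_normpos pb; apply: normpos_psd; apply: normpos_add. Qed.

Lemma psd_mul {a b : Alg} : psd a -> psd b -> psd (a * b).
Proof. by move=> [c ->] [d ->]; exists (c * d); rewrite adjM; ring. Qed.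

Lemma psd_scale {r : R} {a : Alg} : 0 <= r -> psd a -> psd (r%:C *: a).
Proof.
move=> r0 [c ->]; exists ((Num.sqrt r)%:C *: c).
by rewrite adjZR -scalerAl -scalerAr scalerA -rmorphM -expr2 sqr_sqrtr.
Qed.

Lemma psd_algR {r : R} : 0 <= r -> psd r%:C%:A.
Proof. by move=> r0; apply: psd_scale => //; exists 1; rewrite adj1 mulr1. Qed.

Lemma psd_adj {a : Alg} : psd a -> adj a = a.
Proof. by move=> [c ->]; rewrite adjM adjK mulrC. Qed.

Definition ple (a b : Alg) := psd (b - a).

Lemma ple_refl a : ple a a.
Proof. by exists 0; rewrite subrr mulr0. Qed.

Lemma ple_pM {a b c d : Alg} : psd a -> psd d -> ple a b -> ple c d -> ple (a * c) (b * d).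
Proof.
move=> pa pd ab cd; rewrite /ple (_ : b * d - a * c = (b - a) * d + a * (d - c)).
  by apply: psd_add; apply: psd_mul.
by ring.
Qed.

Lemma ple_rnorm {a : Alg} : psd a -> ple a (rnorm a)%:C%:A.
Proof.
move=> pa; apply: normpos_psd; split; first by rewrite adjB adj_algR psd_adj.
by exists (rnorm a); [exact: rnorm_ge0 | rewrite opprB addrC subrK].
Qed.

Lemma adj_inv {g g' : Alg} : adj g = g -> g * g' = 1 -> adj g' = g'.
Proof.
move=> g_sa gg'; have g'g : g * adj g' = 1 by rewrite -g_sa -adjM gg' adj1.
by rewrite -[adj g']mul1r -gg' -mulrA [g' * _]mulrC mulrA g'g mul1r.
Qed.

Lemma inv_rnorm_gt0 {g g' : Alg} : g * g' = 1 -> 0 < rnorm g'.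
Proof.
move=> gg'; rewrite lt_neqAle rnorm_ge0 andbT eq_sym; apply/eqP => /rnorm_eq0 g'0.
by move: one_neq0; rewrite -[one]/(1 : Alg) -gg' g'0 mulr0 eqxx.
Qed.

Lemma inv_rnorm_le {g g' : Alg} : g * g' = 1 -> (rnorm g')^-1 <= rnorm g.
Proof.
move=> gg'; have g'0 := inv_rnorm_gt0 gg'.
by rewrite -[_^-1]mul1r ler_pdivrMr // -{1}rnorm1 -gg' rnormM.
Qed.

(* g - c = c (||g'|| - g') g for c = ||g'||^-1, where g' is positive as well. *)
Lemma psd_inv_lb {g g' : Alg} : psd g -> g * g' = 1 -> ple (rnorm g')^-1%:C%:A g.
Proof.
move=> pg gg'; have g'_sa := adj_inv (psd_adj pg) gg'.
have pg' : psd g'.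
  case: pg => k g_kk; exists (k * g').
  by rewrite adjM g'_sa mulrACA -g_kk mulrA gg' mul1r.
have g'0 := inv_rnorm_gt0 gg'.
rewrite /ple (_ : g - _ = (rnorm g')^-1%:C *: (((rnorm g')%:C%:A - g') * g)).
  by apply: psd_scale; [rewrite invr_ge0 ltW | apply: psd_mul => //; exact: ple_rnorm].
rewrite mulrBl -scalerAl mul1r [g' * g]mulrC gg' scalerBr scalerA -rmorphM.
by rewrite mulVf ?scale1r // gt_eqF.
Qed.

Lemma ple_psd {a b : Alg} : psd a -> ple a b -> psd b.
Proof. by move=> pa ab; rewrite -[b](subrK a); apply: psd_add. Qed.

Lemma ple_lower_scale (g h s : Alg) (lb c : R) : psd g -> psd h -> 0 <= lb -> 0 <= c ->
  ple c%:C%:A g -> ple (lb%:C *: h) s -> ple ((lb * c)%:C *: (h * g)) (g * g * s).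
Proof.
move=> pg ph lb0 c0 cg hs; have plbh := psd_scale lb0 ph.
have -> : (lb * c)%:C *: (h * g) = c%:C%:A * (lb%:C *: h) * g.
  by rewrite mulr_algl -!scalerAl scalerA -rmorphM (mulrC c).
rewrite [g * g * s]mulrAC; apply: (ple_pM _ pg _ (ple_refl g)).
  exact: psd_mul (psd_algR c0) plbh.
exact: ple_pM (psd_algR c0) (ple_psd plbh hs) cg hs.
Qed.

Lemma ple_upper_scale (g h s : Alg) (ub : R) : psd g -> psd h -> psd s -> 0 <= ub ->
  ple s (ub%:C *: h) -> ple (g * g * s) ((ub * rnorm g)%:C *: (h * g)).
Proof.
move=> pg ph ps ub0 sh.
have -> : (ub * rnorm g)%:C *: (h * g) = (rnorm g)%:C%:A * (ub%:C *: h) * g.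
  by rewrite mulr_algl -!scalerAl scalerA -rmorphM (mulrC (rnorm g)).
rewrite [g * g * s]mulrAC; apply: (ple_pM (psd_mul pg ps) pg _ (ple_refl g)).
exact: ple_pM pg (psd_scale ub0 ph) (ple_rnorm pg) sh.
Qed.

Section HilbertModule.
Context {E : lmodType R[i]} {act : A -> E -> E} {ip : E -> E -> A}.
Hypothesis HM : is_hilbert_module mul one star act ip.

Definition inner (x y : E) : Alg := ip x y.

Lemma inner_adj x y : adj (inner x y) = inner y x.
Proof. by rewrite /inner (hm_ip_sym HM y x). Qed.

Lemma innerBr x y z : inner x (y - z) = inner x y - inner x z.
Proof. by rewrite /inner (hm_ipDr HM) -scaleN1r (hm_ipZr HM) scaleN1r. Qed.

Lemma innerBl x y z : inner (x - y) z = inner x z - inner y z.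
Proof. by rewrite -inner_adj innerBr adjB !inner_adj. Qed.

Lemma inner_actl a x z : inner (act a x) z = adj a * inner x z.
Proof.
by rewrite /inner -{1}(hm_act1 HM z) (hm_ip_act HM) [mul _ one](cs_mulC HA) (cs_mul1 HA).
Qed.

Lemma inner_actr a x z : inner z (act a x) = inner z x * a.
Proof.
by rewrite /inner -{1}(hm_act1 HM z) (hm_ip_act HM) -/(adj 1) adj1 (cs_mul1 HA).
Qed.

Lemma inner_psd x : psd (inner x x).
Proof. exact: hm_ip_pos HM x. Qed.

Definition perp (xi : E) (g' : Alg) (x : E) : E := x - act (g' * inner xi x) xi.

Section OrthogonalPart.
Context {xi : E} {g' : Alg}.
Hypothesis xi_inv : inner xi xi * g' = 1.

Local Notation g := (inner xi xi).
Local Notation perp := (perp xi g').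

Lemma adj_coef x : adj (g' * inner xi x) = inner x xi * g'.
Proof. by rewrite adjM (adj_inv (psd_adj (inner_psd xi)) xi_inv) inner_adj mulrC. Qed.

Lemma inner_perp_xi x : inner (perp x) xi = 0.
Proof. by rewrite innerBl inner_actl adj_coef -mulrA [g' * _]mulrC xi_inv mulr1 subrr. Qed.

Lemma ip2_perpl x z : ip2 mul ip x z xi = inner (perp x) z * g.
Proof.
rewrite innerBl inner_actl adj_coef.
have -> : (inner x z - inner x xi * g' * inner xi z) * g =
  inner x z * g - inner x xi * inner xi z * (g * g') by ring.
by rewrite xi_inv mulr1.
Qed.

Lemma ip2_perpr x z : ip2 mul ip z x xi = inner z (perp x) * g.
Proof.
rewrite innerBr inner_actr.
have -> : (inner z x - inner z xi * (g' * inner xi x)) * g =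
  inner z x * g - inner z xi * inner xi x * (g * g') by ring.
by rewrite xi_inv mulr1.
Qed.

Lemma ip2_perp x : ip2 mul ip x x xi = inner (perp x) (perp x) * g.
Proof.
have -> : inner (perp x) (perp x) = inner (perp x) x.
  by rewrite {2}/perp innerBr inner_actr inner_perp_xi mul0r subr0.
exact: ip2_perpl.
Qed.

Lemma ip2_perp_mul x z : (ip2 mul ip x z xi : Alg) * ip2 mul ip z x xi =
  g * g * (inner (perp x) z * inner z (perp x)).
Proof. by rewrite ip2_perpl ip2_perpr; ring. Qed.

Lemma series_ip2_perp {xs : nat -> E} {x : E} {s : Alg} :
  series_to (fun i => mul (ip (perp x) (xs i)) (ip (xs i) (perp x))) s ->
  series_to (fun i => mul (ip2 mul ip x (xs i) xi) (ip2 mul ip (xs i) x xi)) (g * g * s).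
Proof.
rewrite /series_to => /(cvg_mul (cvg_cst (g * g))); apply: cvg_trans.
apply: near_eq_cvg; apply: nearW => n /=; rewrite mulr_sumr; apply: eq_bigr => i _.
exact: esym (ip2_perp_mul x (xs i)).
Qed.

End OrthogonalPart.

Lemma two_frame_of_frame (xs : nat -> E) (xi : E) :
  is_frame mul star ip xs -> cs_invertible mul one (ip xi xi) ->
  exists (C D : R), 0 < C /\ C <= D /\
    forall x : E, exists s : A,
      series_to (fun i => mul (ip2 mul ip x (xs i) xi) (ip2 mul ip (xs i) x xi)) s /\
      cs_le mul star ((C%:C) *: ip2 mul ip x x xi) s /\
      cs_le mul star s ((D%:C) *: ip2 mul ip x x xi).
Proof.
move=> [lb [ub [lb0 [lbub frame]]]] [g' [gg' _]].
have pg := inner_psd xi; have g'0 := inv_rnorm_gt0 gg'.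
exists (lb * (rnorm g')^-1), (ub * rnorm (inner xi xi)); split; [|split].
- by rewrite mulr_gt0 ?invr_gt0.
- apply: ler_pM => //; first exact: ltW.
    by rewrite invr_ge0 ltW.
  exact: inv_rnorm_le gg'.
move=> x; have [s [s_sum [lb_s s_ub]]] := frame (perp xi g' x).
have py := inner_psd (perp xi g' x).
exists (inner xi xi * inner xi xi * s); split; [|split].
- exact (series_ip2_perp gg' s_sum).
- rewrite (ip2_perp gg'); apply: ple_lower_scale => //; first exact: ltW.
    by rewrite invr_ge0 ltW.
  exact: psd_inv_lb pg gg'.
- rewrite (ip2_perp gg'); apply: ple_upper_scale => //; last by rewrite (le_trans (ltW lb0)).
  exact: ple_psd (psd_scale (ltW lb0) py) lb_s.
Qed.

End HilbertModule.
End ComCstarAlgebra.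

Lemma two_frame_trivial_algebra (R : realType) (A : completeNormedModType R[i])
    (mul : A -> A -> A) (one : A) (star : A -> A)
    (E : lmodType R[i]) (ip : E -> E -> A) (xs : nat -> E) (xi : E) :
  is_comCstar_algebra mul one star -> one = 0 ->
  exists (C D : R), 0 < C /\ C <= D /\
    forall x : E, exists s : A,
      series_to (fun i => mul (ip2 mul ip x (xs i) xi) (ip2 mul ip (xs i) x xi)) s /\
      cs_le mul star ((C%:C) *: ip2 mul ip x x xi) s /\
      cs_le mul star s ((D%:C) *: ip2 mul ip x x xi).
Proof.
move=> HA one0.
have mul0 a : mul 0 a = 0 by apply: (@addrI _ (mul 0 a)); rewrite -(cs_mulDl HA) !addr0.
have all0 (a : A) : a = 0 by rewrite -(cs_mul1 HA a) one0 mul0.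
exists 1, 1; split; [exact: ltr01 | split; [exact: lexx | move=> x]].
exists 0; split; last by split; exists 0; rewrite [LHS]all0 [RHS]all0.
rewrite /series_to (_ : (fun n => _) = fun=> 0); first exact: cvg_cst.
by apply/funext => n; apply: all0.
Qed.

Theorem proposition2p2 (R : realType) (A : completeNormedModType R[i])
    (mul : A -> A -> A) (one : A) (star : A -> A)
    (E : lmodType R[i]) (act : A -> E -> E) (ip : E -> E -> A)
    (xs : nat -> E) (xi : E) :
  is_comCstar_algebra mul one star ->
  is_hilbert_module mul one star act ip ->
  is_frame mul star ip xs ->
  cs_invertible mul one (ip xi xi) ->
  exists (C D : R), 0 < C /\ C <= D /\
    forall x : E, exists s : A,
      series_to (fun i => mul (ip2 mul ip x (xs i) xi) (ip2 mul ip (xs i) x xi)) s /\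
      cs_le mul star ((C%:C) *: ip2 mul ip x x xi) s /\
      cs_le mul star s ((D%:C) *: ip2 mul ip x x xi).
Proof.
move=> HA HM HF HI.
have [one0|one_neq0] := eqVneq one 0; first exact: two_frame_trivial_algebra HA one0.
exact (two_frame_of_frame HA one_neq0 HM xs xi HF HI).
Qed.
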